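(* Let $S=(U,F)$ be an undirected graph on $q$ nodes, possibly with self-loops, and let $n'$ be a nonnegative integer. Let $A'\in\mathcal{A}(S)$ be such that $n'A'$ is integer-valued and $\operatorname{diag}A'=0$, and set $x'=A'\mathbf{1}$. Then the directed graph $\vec G'$, where $G'=M(n'x',S)$, admits a Hamiltonian decomposition $H'$ with $\rho(H')=A'$ and such that every cycle of $H'$ is simple.
   Context: An undirected graph $G=(V,E)$ without self-loops is complete $S$-multipartite if there is a map $\pi:V\to U$ such that for distinct $v,w\in V$, $(v,w)\in E$ iff $(\pi(v),\pi(w))\in F$; $M(w,S)$ denotes the complete $S$-multipartite graph with $|\pi^{-1}(u_i)|=w_i$. $\vec G$ replaces each edge $(v,w)$ by the directed edges $vw$ and $wv$. A Hamiltonian decomposition of a digraph is a spanning subgraph that is a node-disjoint union of directed cycles covering all nodes. For a Hamiltonian decomposition $H$ of $\vec G$ with $G$ on $n$ nodes, $\rho(H)=\frac1n[n_{ij}(H)]$ where $n_{ij}(H)$ counts edges of $H$ from $\pi^{-1}(u_i)$ to $\pi^{-1}(u_j)$. A directed cycle is simple if its image under $\pi$ is a cycle (no repeated nodes) of $\vec S$. $\mathcal{A}(S)$ is the set of nonnegative $q\times q$ matrices $A$ with $a_{ij}=0$ whenever $(u_i,u_j)\notin F$, $A\mathbf{1}=A^\top\mathbf{1}$, and $\mathbf{1}^\top A\mathbf{1}=1$. *)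

From HB Require Import structures.
From mathcomp Require Import all_boot all_order all_algebra all_fingroup.
Set Implicit Arguments. Unset Strict Implicit. Unset Printing Implicit Defensive.
Import Order.TTheory GRing.Theory Num.Theory.
Local Open Scope ring_scope.

(* A complete S-multipartite graph G on a finite node type V is
   given by the map pi : V -> 'I_q: distinct v, w are adjacent iff
   F (pi v) (pi w). *)
Definition mpart_edge (q : nat) (F : rel 'I_q) (V : finType) (pi : V -> 'I_q)
  (v w : V) : bool := (v != w) && F (pi v) (pi w).

Definition inA (R : numDomainType) (q : nat) (F : rel 'I_q) (A : 'M[R]_q) : Prop :=
  [/\ forall i j, 0 <= A i j,
      forall i j, ~~ F i j -> A i j = 0,
      forall i, \sum_j A i j = \sum_j A j i
    & \sum_i \sum_j A i j = 1].

(* A Hamiltonian decomposition of \vec G (spanning, node-disjoint union of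
   directed cycles covering all nodes) is encoded by its successor map, a
   permutation H of V, every arc v -> H v being an arc of \vec G. *)
Definition ham_decomp (q : nat) (F : rel 'I_q) (V : finType) (pi : V -> 'I_q)
  (H : {perm V}) : Prop :=
  forall v, mpart_edge F pi v (H v).

Definition nij (q : nat) (V : finType) (pi : V -> 'I_q) (H : {perm V})
  (i j : 'I_q) : nat := #|[set v | (pi v == i) && (pi (H v) == j)]|.

Definition rho (R : fieldType) (q : nat) (V : finType) (pi : V -> 'I_q)
  (H : {perm V}) : 'M[R]_q :=
  \matrix_(i, j) ((#|V|%:R)^-1 * (nij pi H i j)%:R).

(* Every cycle of H is simple: its image under pi has no repeated nodes,
   i.e. pi is injective on every cycle (orbit) of H.  (That consecutive
   images are arcs of \vec S follows from ham_decomp.) *)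
Definition simple_cycles (q : nat) (V : finType) (pi : V -> 'I_q)
  (H : {perm V}) : Prop :=
  forall v w, w \in porbit H v -> pi w = pi v -> w = v.

From HB Require Import structures.
From mathcomp Require Import all_boot all_order all_algebra all_fingroup.
Set Implicit Arguments. Unset Strict Implicit. Unset Printing Implicit Defensive.
Import Order.TTheory GRing.Theory Num.Theory.

(* The integer matrix N = n'A is the arc-multiplicity matrix of a loopless
   multidigraph on the classes of S whose in- and out-degrees agree, so it is a
   sum of simple directed cycles of S, and class i lies on exactly
   sum_j N_ij = |pi^-1(u_i)| of them.  Labelling the nodes of class i by
   distinct cycles through i, every cycle of S lifts to a cycle of G' through
   the nodes carrying its label; these lifts form H', each of its cycles is
   simple, and H' has exactly N_ij arcs from class i to class j. *)


Lemma exists_periodic_iterate (T : finType) (f : T -> T) x :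
  exists a k, iter k.+1 f (iter a f x) = iter a f x.
Proof.
have /trajectP [a lt_a_order iter_order_a] := looping_order f x.
exists a, (fingraph.order f x - a).-1.
by rewrite prednK ?subn_gt0 // -iterD subnK ?iter_order_a // ltnW.
Qed.

Section CycleDecomposition.
Variable T : finType.

Definition arc_count (cs : seq (seq T)) (i j : T) : nat :=
  count (fun c => (i \in c) && (next c i == j)) cs.

Lemma sum_nat_pred1 (a : T) (b : bool) : \sum_j (b && (a == j) : nat) = b.
Proof.
rewrite (bigD1 a) //= eqxx andbT big1 ?addn0 // => j /negbTE.
by rewrite eq_sym => ->; rewrite andbF.
Qed.

Lemma sum_next_row (c : seq T) i :
  \sum_j ((i \in c) && (next c i == j) : nat) = (i \in c).
Proof. exact: sum_nat_pred1. Qed.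

Lemma sum_next_col (c : seq T) j : uniq c ->
  \sum_i ((i \in c) && (next c i == j) : nat) = (j \in c).
Proof.
move=> uc; rewrite -(sum_nat_pred1 (prev c j)); apply: eq_bigr => i _.
congr nat_of_bool; apply/andP/andP => [[ic /eqP <-] | [jc /eqP <-]].
  by rewrite mem_next prev_next.
by rewrite mem_prev next_prev.
Qed.

Lemma sum_arc_count_row cs i :
  \sum_j arc_count cs i j = count (fun c => i \in c) cs.
Proof.
elim: cs => [|c cs IH]; first by rewrite big1.
by rewrite big_split /= IH sum_next_row.
Qed.

Lemma sum_arc_count_col cs j : all uniq cs ->
  \sum_i arc_count cs i j = count (fun c => j \in c) cs.
Proof.
elim: cs => [|c cs IH /= /andP[uc ucs]]; first by rewrite big1.
by rewrite big_split /= IH // sum_next_col.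
Qed.

Lemma support_cycle (N : T -> T -> nat) x :
    (forall i, \sum_j N i j = \sum_j N j i) -> 0 < \sum_j N x j ->
  exists c, [/\ uniq c, c != [::] & {in c, forall i, 0 < N i (next c i)}].
Proof.
move=> balN; pose s i := odflt i [pick j | 0 < N i j].
have N_s i : 0 < \sum_j N i j -> 0 < N i (s i).
  rewrite /s; case: pickP => //= N0; rewrite big1 // => j _.
  by apply/eqP; rewrite -leqn0 leqNgt N0.
have out_s i : 0 < \sum_j N i j -> 0 < \sum_j N (s i) j.
  move=> /N_s N_is; rewrite balN (bigD1 i) //=.
  exact: leq_trans N_is (leq_addr _ _).
move=> Nx; have [a [k periodic]] := exists_periodic_iterate s x.
set y := iter a s x in periodic.
have cyc_y : fcycle s (fingraph.orbit s y) by apply/(orbitPcycle 0 3); exists k.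
exists (fingraph.orbit s y); split; first exact: orbit_uniq.
  by apply/eqP => /(f_equal (fun c => y \in c)); rewrite in_orbit.
move=> i i_orb; rewrite -(eqP (next_cycle cyc_y i_orb)); apply: N_s.
move: i_orb; rewrite -fconnect_orbit => /iter_findex <-; rewrite /y -iterD.
by elim: (_ + a) => //= n; apply: out_s.
Qed.

Lemma balanced_cycle_decomposition (N : T -> T -> nat) :
    (forall i, \sum_j N i j = \sum_j N j i) ->
  exists2 cs, all uniq cs & forall i j, N i j = arc_count cs i j.
Proof.
have [m] := ubnP (\sum_i \sum_j N i j); elim: m N => // m IH N ltNm balN.
have [N0 | [x Nx]] : (forall i j, N i j = 0) \/ exists x, 0 < \sum_j N x j.
- case: (pickP (fun x => 0 < \sum_j N x j)) => [x Nx | N0]; [by right; exists x | left].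
  by move=> i j; apply/eqP; move/negbT: (N0 i); rewrite lt0n negbK sum_nat_eq0 => /forallP/(_ j).
- by exists [::] => // i j; rewrite N0.
have [c [uc c0 N_c]] := support_cycle balN Nx.
have [y yc] : exists y, y \in c by case: c c0 uc N_c => // y c; exists y; rewrite mem_head.
pose N' i j := N i j - arc_count [:: c] i j.
have N_split i j : N i j = N' i j + arc_count [:: c] i j.
  rewrite subnK // /arc_count /= addn0.
  by case: (boolP (i \in c)) => //= ic; case: eqP => // <-; apply: N_c.
have rowN i : \sum_j N i j = \sum_j N' i j + (i \in c).
  by rewrite (eq_bigr _ (fun j _ => N_split i j)) big_split sum_arc_count_row /= addn0.
have colN i : \sum_j N j i = \sum_j N' j i + (i \in c).
  by rewrite (eq_bigr _ (fun j _ => N_split j i)) big_split sum_arc_count_col /= ?uc ?addn0.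
have [cs ucs N'_cs] : exists2 cs, all uniq cs & forall i j, N' i j = arc_count cs i j.
  apply: IH => [|i]; last by apply/eqP; rewrite -(eqn_add2r (i \in c)) -rowN -colN balN.
  rewrite -ltnS (leq_trans _ ltNm) // ltnS (eq_bigr _ (fun i _ => rowN i)) big_split /=.
  by rewrite -[X in X < _]addn0 ltn_add2l (bigD1 y) //= yc.
by exists (c :: cs) => [|i j]; rewrite /= ?uc // N_split N'_cs /arc_count /= addn0 addnC.
Qed.
End CycleDecomposition.

Lemma uniq_map_inj_in (T1 T2 : eqType) (f : T1 -> T2) (s : seq T1) :
  uniq (map f s) -> {in s &, injective f}.
Proof.
elim: s => //= a s IH /andP[fa_notin /IH f_inj] x y.
rewrite !in_cons => /predU1P[-> | xs] /predU1P[-> | ys] // fxy.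
- by move: fa_notin; rewrite fxy map_f.
- by move: fa_notin; rewrite -fxy map_f.
- exact: f_inj.
Qed.

Lemma map_index_uniq (T : eqType) (s : seq T) :
  uniq s -> map (index^~ s) s = iota 0 (size s).
Proof.
elim: s => //= a s IH /andP[a_notin us]; rewrite eqxx; congr cons.
rewrite -[1]addn0 iotaDl -IH // -map_comp; apply/eq_in_map => x xs /=.
by case: eqP => // ax; move: a_notin; rewrite ax xs.
Qed.

Section Fibers.
Variables (V : finType) (T : eqType) (f : V -> T).

Definition fiber (t : T) : seq V := [seq v <- enum V | f v == t].

Lemma mem_fiber t v : (v \in fiber t) = (f v == t).
Proof. by rewrite mem_filter mem_enum andbT. Qed.

Lemma fiber_uniq t : uniq (fiber t).
Proof. by rewrite filter_uniq ?enum_uniq. Qed.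

Lemma card_fiber_count t (P : pred V) :
  #|[set v | (f v == t) && P v]| = count P (fiber t).
Proof.
rewrite cardsE cardE /enum_mem size_filter /fiber count_filter enumT.
by apply: eq_count => v; rewrite /= andbC.
Qed.

Lemma size_fiber t : size (fiber t) = #|[set v | f v == t]|.
Proof.
by rewrite -count_predT -card_fiber_count; apply: eq_card => v; rewrite !inE andbT.
Qed.

Lemma exists_fiber_enumeration (X : Type) (x0 : X) (L : T -> seq X) :
    (forall t, #|[set v | f v == t]| = size (L t)) ->
  exists K : V -> X, forall t, map K (fiber t) = L t.
Proof.
move=> sizeL; exists (fun v => nth x0 (L (f v)) (index v (fiber (f v)))) => t.
transitivity (map (fun v => nth x0 (L t) (index v (fiber t))) (fiber t)).
  by apply/eq_in_map => v; rewrite mem_fiber => /eqP ->.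
by rewrite map_comp map_index_uniq ?fiber_uniq // size_fiber sizeL map_nth_iota0 ?take_size.
Qed.

End Fibers.

Definition cycles_through (T : eqType) (cs : seq (seq T)) (i : T) : seq nat :=
  [seq k <- iota 0 (size cs) | i \in nth [::] cs k].

Lemma size_cycles_through (T : eqType) (cs : seq (seq T)) i :
  size (cycles_through cs i) = count (fun c => i \in c) cs.
Proof.
rewrite size_filter -[in RHS](mkseq_nth [::] cs) count_map.
exact: eq_count.
Qed.

Lemma nij_gt0 (q : nat) (V : finType) (pi : V -> 'I_q) (H : {perm V}) v :
  0 < nij pi H (pi v) (pi (H v)).
Proof. by apply/card_gt0P; exists v; rewrite inE !eqxx. Qed.

Section LiftCycles.
Variables (q : nat) (cs : seq (seq 'I_q)) (V : finType) (pi : V -> 'I_q).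
Variable K : V -> nat.
Hypothesis cs_uniq : all uniq cs.
Hypothesis K_fiber : forall i, map K (fiber pi i) = cycles_through cs i.

(* [K v] is the index in [cs] of the cycle labelling [v]. *)
Let cycle_of v := nth [::] cs (K v).

Lemma cycle_of_uniq v : uniq (cycle_of v).
Proof.
case: (ltnP (K v) (size cs)) => [lt_K | ge_K]; first exact/(allP cs_uniq)/mem_nth.
by rewrite /cycle_of nth_default.
Qed.

Lemma K_inj v w : pi v = pi w -> K v = K w -> v = w.
Proof.
move=> pi_vw; apply: (@uniq_map_inj_in _ _ K (fiber pi (pi w))); rewrite ?mem_fiber ?pi_vw //.
by rewrite K_fiber filter_uniq ?iota_uniq.
Qed.

Lemma exists_succ v :
  exists w, (pi w == next (cycle_of v) (pi v)) && (K w == K v).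
Proof.
have : K v \in cycles_through cs (next (cycle_of v) (pi v)).
  have : K v \in cycles_through cs (pi v) by rewrite -K_fiber map_f ?mem_fiber.
  by rewrite !mem_filter mem_next.
rewrite -K_fiber => /mapP[w]; rewrite mem_fiber => pi_w K_vw.
by exists w; rewrite pi_w K_vw !eqxx.
Qed.

Let succ v := xchoose (exists_succ v).

Lemma succ_spec v : pi (succ v) = next (cycle_of v) (pi v) /\ K (succ v) = K v.
Proof. by have /andP[/eqP ? /eqP ?] := xchooseP (exists_succ v). Qed.

Lemma succ_inj : injective succ.
Proof.
move=> v w succ_vw; have [pi_v K_v] := succ_spec v; have [pi_w K_w] := succ_spec w.
have K_vw : K v = K w by rewrite -K_v -K_w succ_vw.
apply: (K_inj _ K_vw); apply: (can_inj (prev_next (cycle_of_uniq v))).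
by rewrite -pi_v succ_vw pi_w /cycle_of K_vw.
Qed.

Lemma lift_cycle_decomposition : exists H : {perm V},
  (forall i j, nij pi H i j = arc_count cs i j) /\ simple_cycles pi H.
Proof.
exists (perm succ_inj); split => [i j | v w /porbitP[n ->] /K_inj].
  rewrite /nij card_fiber_count.
  transitivity (count (fun k => next (nth [::] cs k) i == j) (map K (fiber pi i))).
    rewrite count_map; apply: eq_in_count => v; rewrite mem_fiber => /eqP pi_v /=.
    by rewrite permE (proj1 (succ_spec v)) pi_v.
  rewrite K_fiber count_filter /arc_count -[in RHS](mkseq_nth [::] cs) count_map.
  by apply: eq_count => k; rewrite /= andbC.
apply; rewrite permX.
by elim: n => //= n IH; rewrite permE (proj2 (succ_spec _)) IH.
Qed.

End LiftCycles.

Lemma card_sum_fibers (V T : finType) (f : V -> T) :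
  #|V| = \sum_t #|[set v | f v == t]|.
Proof.
rewrite -sum1_card (partition_big f xpredT) //=.
by apply: eq_bigr => t _; rewrite sum1dep_card.
Qed.

Local Open Scope ring_scope.

Lemma int_ge0_natr (R : numDomainType) (x : R) (z : int) :
  x = z%:~R -> 0 <= x -> exists m : nat, x = m%:R.
Proof. by case: z => m ->; [exists m | rewrite ler0z]. Qed.

Lemma exists_nat_matrix (R : numDomainType) (I J : Type) (A : I -> J -> R) :
    (forall i j, 0 <= A i j) -> (forall i j, exists z : int, A i j = z%:~R) ->
  exists N : I -> J -> nat, forall i j, (N i j)%:R = A i j.
Proof.
move=> A_ge0 A_int; have N_ex i j : exists m : nat, A i j == m%:R.
  by have [z /int_ge0_natr[|m ->]] := A_int i j; [exact: A_ge0 | exists m].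
by exists (fun i j => xchoose (N_ex i j)) => i j; rewrite -(eqP (xchooseP (N_ex i j))).
Qed.

Theorem lemma8 (R : realFieldType) (q : nat) (F : rel 'I_q)
  (F_sym : symmetric F) (n' : nat) (n'_gt0 : (0 < n')%N)
  (A : 'M[R]_q) (hA : inA F A)
  (hint : forall i j, exists z : int, n'%:R * A i j = z%:~R)
  (hdiag : forall i, A i i = 0)
  (V : finType) (pi : V -> 'I_q)
  (hfib : forall i, (#|[set v | pi v == i]|)%:R = n'%:R * \sum_j A i j) :
  exists H : {perm V},
    [/\ ham_decomp F pi H, rho R pi H = A & simple_cycles pi H].
Proof.
case: hA => A_ge0 A_F A_bal A_sum1.
have [N NA] : exists N : 'I_q -> 'I_q -> nat, forall i j, (N i j)%:R = n'%:R * A i j.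
  by apply: exists_nat_matrix => // i j; rewrite mulr_ge0 ?ler0n.
have n'_neq0 : n'%:R != 0 :> R by rewrite pnatr_eq0 -lt0n.
have N_arc i j : (0 < N i j)%N -> (i != j) && F i j.
  rewrite lt0n -(eqr_nat R) NA mulf_eq0 negb_or n'_neq0 /= => A_ij; apply/andP; split.
    by apply: contraNneq A_ij => ->; rewrite hdiag.
  by apply: contraNT A_ij => /A_F ->.
have rowN i : (\sum_j N i j)%:R = n'%:R * \sum_j A i j :> R.
  by rewrite natr_sum mulr_sumr; apply: eq_bigr => j _.
have colN i : (\sum_j N j i)%:R = n'%:R * \sum_j A j i :> R.
  by rewrite natr_sum mulr_sumr; apply: eq_bigr => j _.
have N_bal i : (\sum_j N i j = \sum_j N j i)%N.
  by apply/eqP; rewrite -(eqr_nat R) rowN colN A_bal.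
have [cs cs_uniq N_cs] := balanced_cycle_decomposition N_bal.
have fiber_size i : #|[set v | pi v == i]| = size (cycles_through cs i).
  apply/eqP; rewrite -(eqr_nat R) hfib -rowN size_cycles_through -sum_arc_count_row.
  by apply/eqP; congr (_%:R); apply: eq_bigr => j _.
have [K K_fiber] := exists_fiber_enumeration 0%N fiber_size.
have [H [H_nij H_simple]] := lift_cycle_decomposition cs_uniq K_fiber.
have nijN i j : nij pi H i j = N i j by rewrite H_nij N_cs.
have cardV : #|V|%:R = n'%:R :> R.
  rewrite (card_sum_fibers pi) natr_sum (eq_bigr _ (fun i _ => hfib i)).
  by rewrite -mulr_sumr A_sum1 mulr1.
exists H; split => // [v | ].
  have := nij_gt0 pi H v; rewrite nijN => /N_arc/andP[pi_neq F_arc].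
  by rewrite /mpart_edge F_arc andbT; apply: contraNneq pi_neq => <-.
by apply/matrixP => i j; rewrite mxE nijN NA cardV mulKf.
Qed.
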